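(* Suppose (A.1) $\nabla f$ is Lipschitz continuous on $\mathbb{R}^n$ with modulus $L>0$ and (A.3) there are $\mu_f\in\mathbb{R}$, $\mu_r\ge0$ with $\bar\mu:=\mu_f+\mu_r>0$ such that $f-\frac{\mu_f}{2}\|\cdot\|^2$ and $r-\frac{\mu_r}{2}\|\cdot\|^2$ are convex. Let $\Lambda\in\mathbb S^n_{++}$ with $\lambda_MI\succeq\Lambda\succeq\lambda_mI$, and let $x^*$ be the unique minimizer of $\psi=f+r$. For $\tau>0$ set $$b_1:=L-2\lambda_m-\mu_r,\quad b_2:=\frac{(\lambda_M+\mu_r)^2}{\bar\mu},\quad B_1(\tau):=\frac{1+\tau}{\bar\mu}\big(\sqrt{b_1+b_2+\tau}+\sqrt{b_2}\big)^2.$$ Then for each $\tau>0$ there is a constant $B_2(\tau)>0$ (depending only on $\tau$ and on $L,\mu_f,\mu_r,\lambda_m,\lambda_M$) such that for all $x\in\mathbb{R}^n$ and every sample mini-batch $s$, $$\|x-x^*\|^2\le B_1(\tau)\|F^\Lambda_s(x)\|^2+B_2(\tau)\|\nabla f(x)-G_s(x)\|^2.$$ If the exact gradient is used (i.e. $G_s\equiv\nabla f$), then $\|x-x^*\|^2\le B_1(0)\|F^\Lambda(x)\|^2$ for all $x$.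
   Context: $f:\mathbb{R}^n\to\mathbb{R}$ continuously differentiable, $r:\mathbb{R}^n\to(-\infty,+\infty]$ convex, lsc, proper, $\psi:=f+r$. For $\Lambda\in\mathbb S^n_{++}$, $\|x\|_\Lambda^2=\langle x,\Lambda x\rangle$, $\mathrm{prox}^\Lambda_r(x):=\arg\min_y r(y)+\frac12\|x-y\|_\Lambda^2$, $F^\Lambda(x):=x-\mathrm{prox}^\Lambda_r(x-\Lambda^{-1}\nabla f(x))$. A sample mini-batch $s$ yields a stochastic gradient $G_s(x)\in\mathbb{R}^n$ (e.g. $G_s(x)=\frac1m\sum_i\mathcal G(x,s_i)$ for an oracle $\mathcal G$), and $F^\Lambda_s(x):=x-\mathrm{prox}^\Lambda_r(x-\Lambda^{-1}G_s(x))$. Note that $b_1+b_2\ge0$ under the assumptions. *)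

From mathcomp Require Import all_boot.
From Stdlib Require Import Reals.

Set Implicit Arguments.
Unset Strict Implicit.
Unset Printing Implicit Defensive.

Local Open Scope R_scope.

Definition vec (n : nat) := 'I_n -> R.
Definition mat (n : nat) := 'I_n -> 'I_n -> R.

Definition vsum n (u : 'I_n -> R) : R := \big[Rplus/0]_(i < n) u i.

Definition vadd n (x y : vec n) : vec n := fun i => x i + y i.
Definition vsub n (x y : vec n) : vec n := fun i => x i - y i.
Definition vscale n (a : R) (x : vec n) : vec n := fun i => a * x i.
Definition vzero n : vec n := fun _ => 0.

Definition inner n (x y : vec n) : R := vsum (fun i => x i * y i).
Definition norm2 n (x : vec n) : R := inner x x.
Definition norm n (x : vec n) : R := sqrt (norm2 x).

Definition matvec n (A : mat n) (x : vec n) : vec n :=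
  fun i => vsum (fun j => A i j * x j).
Definition matmul n (A B : mat n) : mat n :=
  fun i k => vsum (fun j => A i j * B j k).
Definition idmat n : mat n := fun i j => if i == j then 1 else 0.
Definition symmetric n (A : mat n) : Prop := forall i j, A i j = A j i.

Definition sym_pos_def n (A : mat n) : Prop :=
  symmetric A /\ forall x : vec n, x <> @vzero n -> 0 < inner x (matvec A x).

Definition loewner_bounds n (lm lM : R) (A : mat n) : Prop :=
  forall x : vec n, lm * norm2 x <= inner x (matvec A x) <= lM * norm2 x.

Definition normA2 n (A : mat n) (x : vec n) : R := inner x (matvec A x).

(** Extended reals (-infty excluded): [Some a] is the real a, [None] is +infty. *)
Definition ereal := option R.
Definition ER_le (a b : ereal) : Prop :=
  match a, b with
  | _, None => True
  | None, Some _ => False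
  | Some x, Some y => x <= y
  end.
Definition ER_lt (a b : ereal) : Prop :=
  match a, b with
  | Some x, None => True
  | None, _ => False
  | Some x, Some y => x < y
  end.
Definition ER_add (a b : ereal) : ereal :=
  match a, b with Some x, Some y => Some (x + y) | _, _ => None end.
Definition ER_addR (c : R) (a : ereal) : ereal :=
  match a with Some x => Some (c + x) | None => None end.
Definition ER_scale (t : R) (a : ereal) : ereal :=
  match a with Some x => Some (t * x) | None => None end.

Definition ext_convex n (g : vec n -> ereal) : Prop :=
  forall (x y : vec n) (t : R), 0 < t < 1 ->
    ER_le (g (vadd (vscale t x) (vscale (1 - t) y)))
          (ER_add (ER_scale t (g x)) (ER_scale (1 - t) (g y))).

Definition convex n (g : vec n -> R) : Prop :=
  forall (x y : vec n) (t : R), 0 <= t <= 1 ->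
    g (vadd (vscale t x) (vscale (1 - t) y)) <= t * g x + (1 - t) * g y.

Definition ext_lsc n (g : vec n -> ereal) : Prop :=
  forall (x : vec n) (a : R), ER_lt (Some a) (g x) ->
    exists delta, 0 < delta /\
      forall y : vec n, norm (vsub y x) < delta -> ER_lt (Some a) (g y).

Definition ext_proper n (g : vec n -> ereal) : Prop :=
  exists x : vec n, g x <> None.

Definition is_gradient n (f : vec n -> R) (gradf : vec n -> vec n) : Prop :=
  forall (x : vec n) (eps : R), 0 < eps ->
    exists delta, 0 < delta /\
      forall h : vec n, norm h < delta ->
        Rabs (f (vadd x h) - f x - inner (gradf x) h) <= eps * norm h.

Definition vcontinuous n (F : vec n -> vec n) : Prop :=
  forall (x : vec n) (eps : R), 0 < eps ->
    exists delta, 0 < delta /\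
      forall y : vec n, norm (vsub y x) < delta -> norm (vsub (F y) (F x)) < eps.

Definition C1_with_gradient n (f : vec n -> R) (gradf : vec n -> vec n) : Prop :=
  is_gradient f gradf /\ vcontinuous gradf.

Definition lipschitz n (L : R) (F : vec n -> vec n) : Prop :=
  forall x y : vec n, norm (vsub (F x) (F y)) <= L * norm (vsub x y).

Definition is_prox n (Lam : mat n) (r : vec n -> ereal) (z p : vec n) : Prop :=
  forall y : vec n,
    ER_le (ER_addR (/2 * normA2 Lam (vsub z p)) (r p))
          (ER_addR (/2 * normA2 Lam (vsub z y)) (r y)).

(** p = prox^Lambda_r(x - Lambda^{-1} G), so that the (stochastic)
    prox-gradient residual is F = x - p. Here [Laminv] is the inverse of Lambda. *)
Definition is_prox_grad_point n (Lam Laminv : mat n) (r : vec n -> ereal)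
    (G : vec n) (x p : vec n) : Prop :=
  is_prox Lam r (vsub x (matvec Laminv G)) p.

Definition psi n (f : vec n -> R) (r : vec n -> ereal) (x : vec n) : ereal :=
  ER_addR (f x) (r x).

Definition setting n (L muf mur lm lM : R) (f : vec n -> R) (gradf : vec n -> vec n)
    (r : vec n -> ereal) (Lam Laminv : mat n) (xstar : vec n) : Prop :=
  C1_with_gradient f gradf /\
  ext_convex r /\ ext_lsc r /\ ext_proper r /\
  lipschitz L gradf /\
  convex (fun x => f x - muf / 2 * norm2 x) /\
  ext_convex (fun x => ER_addR (- (mur / 2 * norm2 x)) (r x)) /\
  sym_pos_def Lam /\ loewner_bounds lm lM Lam /\
  matmul Lam Laminv = @idmat n /\ matmul Laminv Lam = @idmat n /\
  (forall y : vec n, ER_le (psi f r xstar) (psi f r y)).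

Definition mubar (muf mur : R) : R := muf + mur.
Definition b1 (L mur lm : R) : R := L - 2 * lm - mur.
Definition b2 (muf mur lM : R) : R := (lM + mur) ^ 2 / mubar muf mur.
Definition B1coef (L muf mur lm lM tau : R) : R :=
  (1 + tau) / mubar muf mur *
  (sqrt (b1 L mur lm + b2 muf mur lM + tau) + sqrt (b2 muf mur lM)) ^ 2.

From Pilot Require Import Defs.
From HB Require Import structures.
From mathcomp Require Import all_boot.
From Stdlib Require Import Reals Lra Psatz FunctionalExtensionality.
Set Implicit Arguments.
Unset Strict Implicit.
Local Open Scope R_scope.

(* Write F = x - p, d = x - xstar and e = grad f(x) - G_s(x).  Adding the
   optimality inequality of the prox step (with the strong convexity of r),
   the strong convexity inequality of f between x and xstar, the descent lemma
   between x and p, and psi(xstar) <= psi(p) gives, after Cauchy-Schwarz and the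
   Loewner bounds,
     mubar |d|^2 <= 2 (lM + mur) |d| |F| + b1 |F|^2 + 2 |e| (|d| + |F|).
   Without the e-term this says that |d| lies below the larger root of a
   quadratic, which is sqrt(B1(0)) |F|.  With it, either |d| is within the
   factor sqrt(1 + tau) of the larger root for b1 + tau (the tau absorbing
   the cross term e |F|), or it is so far beyond that root that the quadratic
   dominates and |d|^2 is a multiple of |e|^2. *)

HB.instance Definition _ := Monoid.isComLaw.Build R 0 Rplus
  (fun x y z => esym (Rplus_assoc x y z)) Rplus_comm Rplus_0_l.

Ltac vec_ring :=
  apply: functional_extensionality => ?;
  repeat match goal with x := _ |- _ => subst x end;
  rewrite /vadd /vsub /vscale; ring.

Section FiniteSums.
Variable n : nat.
Implicit Types u v : 'I_n -> R.

Lemma eq_vsum u v : (forall i, u i = v i) -> vsum u = vsum v.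
Proof. by move=> Huv; apply: eq_bigr => i _. Qed.

Lemma le_vsum u v : (forall i, u i <= v i) -> vsum u <= vsum v.
Proof.
move=> Huv; apply: (big_ind2 (fun x y => x <= y)) => //; [lra | move=> *; lra].
Qed.

Lemma vsum0 : vsum (fun _ : 'I_n => 0) = 0.
Proof. exact: big1. Qed.

Lemma vsumD u v : vsum (fun i => u i + v i) = vsum u + vsum v.
Proof. exact: big_split. Qed.

Lemma vsumZ a u : vsum (fun i => a * u i) = a * vsum u.
Proof.
symmetry; apply: (big_morph (fun x => a * x) (id1 := 0) (op1 := Rplus)) => [x y|] /=;
  ring.
Qed.

Lemma vsumB u v : vsum (fun i => u i - v i) = vsum u - vsum v.
Proof.
rewrite (eq_vsum (v := fun i => u i + (-1) * v i)) => [|i]; last ring.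
by rewrite vsumD vsumZ; ring.
Qed.

Lemma exchange_vsum (A : 'I_n -> 'I_n -> R) :
  vsum (fun i => vsum (fun j => A i j)) = vsum (fun j => vsum (fun i => A i j)).
Proof. exact: exchange_big. Qed.

End FiniteSums.

Section InnerProduct.
Variable n : nat.
Implicit Types (x y z : vec n) (A B : mat n).

Lemma innerC x y : inner x y = inner y x.
Proof. by apply: eq_vsum => i; ring. Qed.

Lemma innerDl x y z : inner (vadd x y) z = inner x z + inner y z.
Proof. by rewrite /inner -vsumD; apply: eq_vsum => i; rewrite /vadd; ring. Qed.

Lemma innerDr x y z : inner z (vadd x y) = inner z x + inner z y.
Proof. by rewrite /inner -vsumD; apply: eq_vsum => i; rewrite /vadd; ring. Qed.

Lemma innerBl x y z : inner (vsub x y) z = inner x z - inner y z.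
Proof. by rewrite /inner -vsumB; apply: eq_vsum => i; rewrite /vsub; ring. Qed.

Lemma innerBr x y z : inner z (vsub x y) = inner z x - inner z y.
Proof. by rewrite /inner -vsumB; apply: eq_vsum => i; rewrite /vsub; ring. Qed.

Lemma innerZl a x z : inner (vscale a x) z = a * inner x z.
Proof. by rewrite /inner -vsumZ; apply: eq_vsum => i; rewrite /vscale; ring. Qed.

Lemma innerZr a x z : inner z (vscale a x) = a * inner z x.
Proof. by rewrite /inner -vsumZ; apply: eq_vsum => i; rewrite /vscale; ring. Qed.

Lemma norm2_ge0 x : 0 <= norm2 x.
Proof. by rewrite /norm2 /inner -(vsum0 n); apply: le_vsum => i; nra. Qed.

Lemma norm_ge0 x : 0 <= norm x.
Proof. exact: sqrt_pos. Qed.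

Lemma norm2E x : norm2 x = norm x ^ 2.
Proof. by rewrite pow2_sqrt //; apply: norm2_ge0. Qed.

Lemma norm2_addZ x y t :
  norm2 (vadd x (vscale t y)) = norm2 x + 2 * t * inner x y + t ^ 2 * norm2 y.
Proof. by rewrite /norm2 !(innerDl, innerDr, innerZl, innerZr) (innerC y x); ring. Qed.

Lemma norm2Z a x : norm2 (vscale a x) = a ^ 2 * norm2 x.
Proof. by rewrite /norm2 innerZl innerZr; ring. Qed.

Lemma normZ a x : norm (vscale a x) = Rabs a * norm x.
Proof.
rewrite /norm norm2Z sqrt_mult_alt; last exact: pow2_ge_0.
by rewrite -(Rsqr_pow2 a) sqrt_Rsqr_abs.
Qed.

Lemma norm_vsubvv x : norm (vsub x x) = 0.
Proof.
have -> : vsub x x = vscale 0 x by vec_ring.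
by rewrite normZ Rabs_R0 Rmult_0_l.
Qed.

Lemma matvecD A x y : matvec A (vadd x y) = vadd (matvec A x) (matvec A y).
Proof.
apply: functional_extensionality => i; rewrite /matvec /vadd -vsumD.
by apply: eq_vsum => j; ring.
Qed.

Lemma matvecB A x y : matvec A (vsub x y) = vsub (matvec A x) (matvec A y).
Proof.
apply: functional_extensionality => i; rewrite /matvec /vsub -vsumB.
by apply: eq_vsum => j; ring.
Qed.

Lemma matvecZ A a x : matvec A (vscale a x) = vscale a (matvec A x).
Proof.
apply: functional_extensionality => i; rewrite /matvec /vscale -vsumZ.
by apply: eq_vsum => j; ring.
Qed.

Lemma matvec_matmul A B x : matvec A (matvec B x) = matvec (matmul A B) x.
Proof.
apply: functional_extensionality => i; rewrite /matvec /matmul.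
rewrite (eq_vsum (v := fun j => vsum (fun k => A i j * B j k * x k))) => [|j];
  last by rewrite -vsumZ; apply: eq_vsum => k; ring.
rewrite exchange_vsum; apply: eq_vsum => k.
by rewrite -[RHS]Rmult_comm -vsumZ; apply: eq_vsum => j; ring.
Qed.

Lemma matvec_idmat x : matvec (@idmat n) x = x.
Proof.
apply: functional_extensionality => i; rewrite /matvec /idmat /vsum.
rewrite (bigD1 i) //= eqxx big1 => [|j /negbTE]; first ring.
by rewrite eq_sym => ->; ring.
Qed.

Lemma symmetric_idmat : Defs.symmetric (@idmat n).
Proof. by move=> i j; rewrite /idmat eq_sym. Qed.

Lemma inner_matvecC A x y : Defs.symmetric A ->
  inner x (matvec A y) = inner (matvec A x) y.
Proof.
move=> HA; rewrite /inner /matvec.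
rewrite (eq_vsum (v := fun i => vsum (fun j => x i * A i j * y j))) => [|i];
  last by rewrite -vsumZ; apply: eq_vsum => j; ring.
rewrite exchange_vsum; apply: eq_vsum => j.
by rewrite Rmult_comm -vsumZ; apply: eq_vsum => i; rewrite (HA i j); ring.
Qed.

End InnerProduct.

Lemma discriminant_le (al be ga : R) : 0 <= ga ->
  (forall t, 0 <= al + 2 * t * be + t ^ 2 * ga) -> be ^ 2 <= al * ga.
Proof.
move=> Hga Hq; case: (Rle_lt_or_eq_dec 0 ga Hga) => [Hga0|Hga0]; last subst ga.
- have := Hq (- be / ga).
  have -> : al + 2 * (- be / ga) * be + (- be / ga) ^ 2 * ga
          = (al * ga - be ^ 2) / ga by field; lra.
  move=> H; have := Rmult_le_pos _ _ H Hga; rewrite /Rdiv Rmult_assoc Rinv_l; lra.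
- case: (Req_dec be 0) => [->|Hbe]; first lra.
  have := Hq (- (al + 1) / (2 * be)).
  have -> : al + 2 * (- (al + 1) / (2 * be)) * be + (- (al + 1) / (2 * be)) ^ 2 * 0
          = -1 by field.
  lra.
Qed.

Lemma Rabs_le_sqrt_prod X P Q : 0 <= P -> 0 <= Q ->
  X ^ 2 <= P * Q -> Rabs X <= sqrt P * sqrt Q.
Proof.
move=> HP HQ HX; rewrite -sqrt_mult // -sqrt_Rsqr_abs Rsqr_pow2.
exact: sqrt_le_1_alt.
Qed.

Section CauchySchwarz.
Variable n : nat.
Implicit Types (x y : vec n) (A : mat n).

Lemma form_CS A x y : Defs.symmetric A ->
  (forall u : vec n, 0 <= inner u (matvec A u)) ->
  inner (matvec A x) y ^ 2 <= inner x (matvec A x) * inner y (matvec A y).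
Proof.
move=> HA Hpos; apply: discriminant_le => [|t]; first exact: Hpos.
have := Hpos (vadd x (vscale t y)).
rewrite matvecD matvecZ !(innerDl, innerDr, innerZl, innerZr).
by rewrite (inner_matvecC x y HA) (innerC y (matvec A x)); lra.
Qed.

Lemma abs_inner_le x y : Rabs (inner x y) <= norm x * norm y.
Proof.
apply: Rabs_le_sqrt_prod; try exact: norm2_ge0.
have := form_CS x y (@symmetric_idmat n).
rewrite !matvec_idmat; apply=> u; rewrite matvec_idmat; exact: norm2_ge0.
Qed.

Lemma inner_le_loewner lm lM A x y : 0 < lm -> Defs.symmetric A ->
  loewner_bounds lm lM A -> inner (matvec A x) y <= lM * norm x * norm y.
Proof.
move=> Hlm HA Hlw.
have Hpos u : 0 <= inner u (matvec A u) by have := Hlw u; have := norm2_ge0 u; nra.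
have HCS := form_CS x y HA Hpos.
have [Hx1 Hx2] := Hlw x; have [Hy1 Hy2] := Hlw y.
have Hx0 := norm2_ge0 x; have Hy0 := norm2_ge0 y.
case: (Rle_lt_dec 0 lM) => HlM.
- apply: Rle_trans (Rle_abs _) _.
  have -> : lM * norm x * norm y = sqrt (lM ^ 2 * norm2 x) * sqrt (norm2 y).
    by rewrite sqrt_mult_alt ?sqrt_pow2 /norm //; apply: pow2_ge_0.
  apply: Rabs_le_sqrt_prod => //; first nra.
  apply: (Rle_trans _ _ _ HCS).
  have -> : lM ^ 2 * norm2 x * norm2 y = (lM * norm2 x) * (lM * norm2 y) by ring.
  by apply: Rmult_le_compat; try apply: Hpos.
- (* [lM < lm] forces [norm2 x = 0]: this is the zero-dimensional case. *)
  have Hx : norm2 x = 0 by apply: Rle_antisym => //; nra.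
  have -> : inner (matvec A x) y = 0.
    have Px : inner x (matvec A x) = 0 by rewrite Hx in Hx1 Hx2; lra.
    rewrite Px Rmult_0_l in HCS.
    by apply: Rsqr_0_uniq; rewrite Rsqr_pow2; apply: Rle_antisym => //; apply: pow2_ge_0.
  by rewrite /norm Hx sqrt_0; lra.
Qed.

End CauchySchwarz.

Lemma le_of_le_add_small (X Y C : R) :
  (forall t, 0 < t < 1 -> X <= Y + t * C) -> X <= Y.
Proof.
move=> H; apply: Rnot_lt_le => Hlt.
case: (Rle_lt_dec C 0) => HC; first by have := H (/2) ltac:(lra); nra.
set t := Rmin (/2) ((X - Y) / (2 * C)).
have Ht0 : 0 < t by apply: Rmin_pos; [lra | apply: Rdiv_lt_0_compat; lra].
have Ht1 : t <= /2 := Rmin_l _ _.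
have Ht2 : t * C <= (X - Y) / 2.
  have -> : (X - Y) / 2 = (X - Y) / (2 * C) * C by field; lra.
  by apply: Rmult_le_compat_r; [lra | apply: Rmin_r].
have := H t ltac:(lra); lra.
Qed.

(* The [t * t * C] slack is what strong convexity leaves in the secants. *)
Lemma derive_le_of_secant_le (phi : R -> R) D M C :
  derivable_pt_lim phi 0 D ->
  (forall t, 0 < t < 1 -> phi t - phi 0 <= t * (M + t * C)) -> D <= M.
Proof.
move=> Hd Hsec; apply: (le_of_le_add_small (C := Rabs C + 1)) => s Hs.
have [delta Hdelta] := Hd s (proj1 Hs).
set t := Rmin s delta / 2.
have Hmin0 : 0 < Rmin s delta by apply: Rmin_pos; [lra | apply: cond_pos].
have Hts : t <= s by have := Rmin_l s delta; rewrite /t; lra.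
have Htd : t < delta by have := Rmin_r s delta; rewrite /t; lra.
have Ht0 : 0 < t by rewrite /t; lra.
have := Hdelta t ltac:(lra) ltac:(rewrite Rabs_pos_eq; lra).
rewrite Rplus_0_l => /Rabs_def2 [_ Hq].
have := Hsec t ltac:(lra).
set q := (phi t - phi 0) / t in Hq.
have -> : phi t - phi 0 = t * q by rewrite /q; field; lra.
move/(Rmult_le_reg_l _ _ _ Ht0) => Hqle.
have : t * C <= s * Rabs C by have := Rle_abs C; have := Rabs_pos C; nra.
lra.
Qed.

Section Smooth.
Variables (n : nat) (f : vec n -> R) (gradf : vec n -> vec n).
Hypothesis Hgrad : is_gradient f gradf.

Lemma derivable_pt_lim_line x h t :
  derivable_pt_lim (fun s => f (vadd x (vscale s h))) t
    (inner (gradf (vadd x (vscale t h))) h).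
Proof.
move=> eps Heps.
set y := vadd x (vscale t h); set N := norm h + 1; set eps' := eps / (2 * N).
have HN : 0 < N by have := norm_ge0 h; rewrite /N; lra.
have Heps' : 0 < eps' by apply: Rdiv_lt_0_compat; lra.
have Heps'h : eps' * norm h < eps.
  have : eps' * (2 * N) = eps by rewrite /eps'; field; lra.
  by rewrite /N in HN *; nra.
have [delta [Hd Hdelta]] := Hgrad y Heps'.
have Hdn : 0 < delta / N by apply: Rdiv_lt_0_compat.
exists (mkposreal _ Hdn) => s Hs0 /= Hs.
have -> : vadd x (vscale (t + s) h) = vadd y (vscale s h) by vec_ring.
have Hsh : Rabs s * norm h < delta.
  have : Rabs s * N < delta.
    by move: Hs => /(Rmult_lt_compat_r N _ _ HN); rewrite /Rdiv Rmult_assoc Rinv_l; lra.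
  by have := Rabs_pos s; rewrite /N; nra.
have := Hdelta (vscale s h); rewrite normZ innerZr => /(_ Hsh) Hdiff.
have -> : (f (vadd y (vscale s h)) - f y) / s - inner (gradf y) h
          = (f (vadd y (vscale s h)) - f y - s * inner (gradf y) h) / s by field.
have Hs' : 0 < Rabs s by apply: Rabs_pos_lt.
rewrite /Rdiv Rabs_mult Rabs_inv; apply: (Rmult_lt_reg_r (Rabs s)) => //.
rewrite Rmult_assoc Rinv_l; nra.
Qed.

Lemma strongly_convex_first_order muf x y :
  convex (fun x => f x - muf / 2 * norm2 x) ->
  f x + inner (gradf x) (vsub y x) + muf / 2 * norm2 (vsub y x) <= f y.
Proof.
move=> Hconv; set h := vsub y x.
have Ex0 : vadd x (vscale 0 h) = x by vec_ring.
suff : inner (gradf x) h <= f y - f x - muf / 2 * norm2 h by lra.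
apply: (derive_le_of_secant_le (phi := fun s => f (vadd x (vscale s h)))
  (C := muf / 2 * norm2 h)).
  by have := derivable_pt_lim_line x h 0; rewrite Ex0.
move=> t Ht /=; rewrite Ex0.
have := Hconv y x t ltac:(lra) => /=.
have -> : vadd (vscale t y) (vscale (1 - t) x) = vadd x (vscale t h) by vec_ring.
have -> : norm2 y = norm2 (vadd x (vscale 1 h)) by congr norm2; vec_ring.
rewrite !norm2_addZ; lra.
Qed.

Lemma descent_lemma L x y : lipschitz L gradf ->
  f y <= f x + inner (gradf x) (vsub y x) + L / 2 * norm2 (vsub y x).
Proof.
move=> HL; set h := vsub y x; set A := inner (gradf x) h; set B := L / 2 * norm2 h.
have [c [Hmvt Hc]] : exists c,
    f (vadd x (vscale 1 h)) - (A * 1 + B * Rsqr 1) - (f (vadd x (vscale 0 h)) - (A * 0 + B * Rsqr 0))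
    = (inner (gradf (vadd x (vscale c h))) h - (A * 1 + B * (2 * c))) * (1 - 0) /\ 0 < c < 1.
  apply: (MVT_cor2 (fun s => f (vadd x (vscale s h)) - (A * s + B * Rsqr s))) => [|s _];
    first lra.
  apply: derivable_pt_lim_minus; first exact: derivable_pt_lim_line.
  apply: derivable_pt_lim_plus; apply: derivable_pt_lim_scal;
    [exact: derivable_pt_lim_id | exact: derivable_pt_lim_Rsqr].
have E1 : vadd x (vscale 1 h) = y by vec_ring.
have E0 : vadd x (vscale 0 h) = x by vec_ring.
rewrite E1 E0 in Hmvt.
have Hgap : inner (gradf (vadd x (vscale c h))) h - A <= L * c * norm2 h.
  rewrite /A -innerBl.
  have := HL (vadd x (vscale c h)) x.
  have -> : vsub (vadd x (vscale c h)) x = vscale c h by vec_ring.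
  rewrite normZ Rabs_pos_eq; last lra.
  move/(Rmult_le_compat_r _ _ _ (norm_ge0 h)).
  have := Rle_abs (inner (vsub (gradf (vadd x (vscale c h))) (gradf x)) h).
  have := abs_inner_le (vsub (gradf (vadd x (vscale c h))) (gradf x)) h.
  by rewrite norm2E; lra.
rewrite /B /Rsqr in Hmvt *; nra.
Qed.

End Smooth.

Section Prox.
Variables (n : nat) (Lam : mat n) (r : vec n -> ereal).

Lemma prox_finite z p : ext_proper r -> is_prox Lam r z p -> exists rp, r p = Some rp.
Proof.
case=> w Hw /(_ w); case: (r p) => [rp|] Hle; first by exists rp.
by move: Hle; case: (r w) Hw.
Qed.

(* Compare p with the points p + t (w - p) in the prox objective and let t -> 0. *)
Lemma prox_optimality mur z p w rp rw :
  Defs.symmetric Lam ->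
  ext_convex (fun x => ER_addR (- (mur / 2 * norm2 x)) (r x)) ->
  is_prox Lam r z p -> r p = Some rp -> r w = Some rw ->
  rp + inner (vsub w p) (matvec Lam (vsub z p)) + mur / 2 * norm2 (vsub w p) <= rw.
Proof.
move=> HLam Hconv Hprox Hp Hw.
set h := vsub w p; set v := vsub z p.
apply: (le_of_le_add_small (C := mur / 2 * norm2 h + / 2 * normA2 Lam h)) => t Ht.
have := Hconv w p t Ht; have := Hprox (vadd (vscale t w) (vscale (1 - t) p)).
rewrite Hw Hp; case: (r _) => [ry|] //= Hpr Hc.
have Ey : vadd (vscale t w) (vscale (1 - t) p) = vadd p (vscale t h) by vec_ring.
have Ez : vsub z (vadd (vscale t w) (vscale (1 - t) p)) = vsub v (vscale t h) by vec_ring.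
have Ew : w = vadd p (vscale 1 h) by vec_ring.
rewrite -/v Ez in Hpr; rewrite Ey Ew in Hc; clearbody h v.
rewrite /normA2 matvecB matvecZ !(innerBl, innerBr, innerZl, innerZr) in Hpr.
rewrite (inner_matvecC v h HLam) (innerC (matvec Lam v) h) in Hpr.
rewrite !norm2_addZ in Hc.
have key : t * (rp + inner h (matvec Lam v) + mur / 2 * norm2 h)
  <= t * (rw + t * (mur / 2 * norm2 h + / 2 * normA2 Lam h)) by rewrite /normA2; nra.
by apply: Rmult_le_reg_l key; lra.
Qed.

End Prox.

Section ProxGradStep.
Variables (L muf mur lm lM : R) (n : nat) (f : vec n -> R) (gradf : vec n -> vec n)
  (r : vec n -> ereal) (Lam Laminv : mat n) (xstar : vec n).
Hypothesis Hset : setting L muf mur lm lM f gradf r Lam Laminv xstar.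
Variables (g x p : vec n).
Hypothesis Hprox : is_prox_grad_point Lam Laminv r g x p.

Let F := vsub x p.
Let d := vsub x xstar.
Let e := vsub (gradf x) g.

Lemma prox_grad_inner_ineq :
  mubar muf mur * norm2 d <=
    2 * inner (matvec Lam F) d + 2 * mur * inner F d - 2 * inner (matvec Lam F) F
    - mur * norm2 F + L * norm2 F + 2 * inner e (vsub d F).
Proof.
case: Hset => [[Hgrad _] [_ [_ [Hproper [HLip [Hfconv [Hrconv
  [[HLam _] [_ [HLinv [_ Hmin]]]]]]]]]]].
have [rp Hrp] := prox_finite Hproper Hprox.
have := Hmin p; rewrite /psi Hrp; case Hrs: (r xstar) => [rs|] //= Hpsi.
have := prox_optimality HLam Hrconv Hprox Hrp Hrs.
have -> : matvec Lam (vsub (vsub x (matvec Laminv g)) p) = vsub (matvec Lam F) g.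
  have -> : vsub (vsub x (matvec Laminv g)) p = vsub F (matvec Laminv g) by vec_ring.
  by rewrite matvecB matvec_matmul HLinv matvec_idmat.
have := strongly_convex_first_order Hgrad x xstar Hfconv.
have := descent_lemma Hgrad x p HLip.
have -> : vsub xstar p = vsub F d by vec_ring.
have -> : vsub xstar x = vscale (-1) d by vec_ring.
have -> : vsub p x = vscale (-1) F by vec_ring.
rewrite /e; clearbody F d.
rewrite /mubar /norm2 !(innerBl, innerBr, innerZl, innerZr).
rewrite (innerC F d) (innerC (matvec Lam F) d) (innerC (matvec Lam F) F).
rewrite (innerC (gradf x) d) (innerC (gradf x) F) (innerC g d) (innerC g F).
lra.
Qed.

Lemma prox_grad_norm_ineq : 0 < lm -> 0 <= mur ->
  mubar muf mur * norm d ^ 2 <=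
    2 * (lM + mur) * norm d * norm F + b1 L mur lm * norm F ^ 2
    + 2 * norm e * (norm d + norm F).
Proof.
move=> Hlm Hmur; have Hkey := prox_grad_inner_ineq.
case: Hset => _ [_ [_ [_ [_ [_ [_ [[HLam _] [Hlw _]]]]]]]].
have HLd := inner_le_loewner F d Hlm HLam Hlw.
have HLF : lm * norm2 F <= inner (matvec Lam F) F.
  by rewrite innerC; case: (Hlw F).
have HFd : mur * inner F d <= mur * (norm F * norm d).
  by apply: Rmult_le_compat_l => //; apply: Rle_trans (Rle_abs _) (abs_inner_le _ _).
have Hed : inner e (vsub d F) <= norm e * (norm d + norm F).
  rewrite innerBr.
  have := Rle_abs (inner e d); have := Rle_abs (- inner e F); rewrite Rabs_Ropp.
  have := abs_inner_le e d; have := abs_inner_le e F; lra.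
rewrite /b1 !norm2E in Hkey HLF *; nra.
Qed.

End ProxGradStep.

(* For [mu > 0], the larger root of [mu X^2 - 2 c X - beta] when [c >= 0]
   and the discriminant is nonnegative; [sqrt] turns a negative argument into
   [0], which only enlarges the bound. *)
Definition root_coef (mu c beta : R) : R :=
  (sqrt (beta + c ^ 2 / mu) + sqrt (c ^ 2 / mu)) / sqrt mu.

Section QuadraticBound.
Variable mu : R.
Hypothesis Hmu : 0 < mu.

Lemma root_coef_ge0 c beta : 0 <= root_coef mu c beta.
Proof.
apply: Rmult_le_pos; first by have := sqrt_pos (beta + c ^ 2 / mu); have := sqrt_pos (c ^ 2 / mu); lra.
by apply/Rlt_le/Rinv_0_lt_compat/sqrt_lt_R0.
Qed.

Lemma quad_above_root c beta a b : 0 <= a -> 0 <= b ->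
  root_coef mu c beta * b <= a ->
  mu * (a - root_coef mu c beta * b) ^ 2 <= mu * a ^ 2 - 2 * c * a * b - beta * b ^ 2.
Proof.
rewrite /root_coef; set s := sqrt (beta + c ^ 2 / mu); set s2 := sqrt (c ^ 2 / mu).
set sm := sqrt mu => Ha Hb Hroot.
have Hsm : 0 < sm by apply: sqrt_lt_R0.
have Hsm2 : sm ^ 2 = mu by apply: pow2_sqrt; lra.
have Hs : 0 <= s := sqrt_pos _.
have Hss : beta + c ^ 2 / mu <= s ^ 2.
  case: (Rle_lt_dec 0 (beta + c ^ 2 / mu)) => H; first by rewrite pow2_sqrt; lra.
  by rewrite /s sqrt_neg_0; lra.
have Hs2 : s2 ^ 2 = c ^ 2 / mu by apply: pow2_sqrt; apply: Rle_mult_inv_pos; nra.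
have Hcs : c <= s2 * sm.
  rewrite /s2 /sm -sqrt_mult_alt; last by apply: Rle_mult_inv_pos; nra.
  have -> : c ^ 2 / mu * mu = Rsqr c by rewrite Rsqr_pow2; field; lra.
  by rewrite sqrt_Rsqr_abs; apply: Rle_abs.
have Hfactor : mu * (a - (s + s2) / sm * b) * (a - (s2 - s) / sm * b)
               = mu * a ^ 2 - 2 * (s2 * sm) * a * b + (s2 ^ 2 - s ^ 2) * b ^ 2.
  by rewrite -Hsm2; field; lra.
have Hsb : 0 <= s / sm * b by apply: Rmult_le_pos => //; apply: Rle_mult_inv_pos; lra.
have Hsq : (a - (s + s2) / sm * b) ^ 2 <= (a - (s + s2) / sm * b) * (a - (s2 - s) / sm * b).
  have -> : (s2 - s) / sm * b = (s + s2) / sm * b - 2 * (s / sm * b) by field; lra.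
  nra.
have Hcab : 2 * c * a * b <= 2 * (s2 * sm) * a * b.
  by have := Rmult_le_pos _ _ Ha Hb; nra.
have Hbb : (s2 ^ 2 - s ^ 2) * b ^ 2 <= - beta * b ^ 2.
  by apply: Rmult_le_compat_r; [apply: pow2_ge_0 | lra].
have := Rmult_le_compat_l _ _ _ (Rlt_le _ _ Hmu) Hsq.
rewrite -Rmult_assoc Hfactor; lra.
Qed.

Lemma le_root_coef c beta a b : 0 <= a -> 0 <= b ->
  mu * a ^ 2 <= 2 * c * a * b + beta * b ^ 2 -> a <= root_coef mu c beta * b.
Proof.
move=> Ha Hb Hq; apply: Rnot_lt_le => Hlt.
have := quad_above_root Ha Hb (Rlt_le _ _ Hlt).
have : 0 < (a - root_coef mu c beta * b) ^ 2 by apply: pow_lt; lra.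
nra.
Qed.

Lemma absorb_cross_term tau a e : 0 < tau ->
  mu * a ^ 2 <= 2 * e * a + e ^ 2 / tau ->
  a ^ 2 <= (4 / mu ^ 2 + 2 / (mu * tau)) * e ^ 2.
Proof.
move=> Htau Hq.
have Hyoung : 2 * e * a <= mu / 2 * a ^ 2 + 2 / mu * e ^ 2.
  have : 0 <= (mu * a - 2 * e) ^ 2 / (2 * mu).
    by apply: Rle_mult_inv_pos; [apply: pow2_ge_0 | lra].
  have -> : (mu * a - 2 * e) ^ 2 / (2 * mu) = mu / 2 * a ^ 2 + 2 / mu * e ^ 2 - 2 * e * a
    by field; lra.
  lra.
have -> : a ^ 2 = 2 / mu * (mu / 2 * a ^ 2) by field; lra.
have -> : (4 / mu ^ 2 + 2 / (mu * tau)) * e ^ 2 = 2 / mu * ((2 / mu + / tau) * e ^ 2)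
  by field; lra.
apply: Rmult_le_compat_l; first by apply: Rle_mult_inv_pos; lra.
rewrite /Rdiv in Hq *; lra.
Qed.

End QuadraticBound.

Lemma perturbed_root_bound mu tau : 0 < mu -> 0 < tau ->
  exists C, 0 < C /\ forall c beta a b e, 0 <= a -> 0 <= b -> 0 <= e ->
    mu * a ^ 2 <= 2 * c * a * b + beta * b ^ 2 + 2 * e * (a + b) ->
    a ^ 2 <= (1 + tau) * root_coef mu c (beta + tau) ^ 2 * b ^ 2 + C * e ^ 2.
Proof.
move=> Hmu Htau; set rho := sqrt (1 + tau).
have Hrho2 : rho ^ 2 = 1 + tau by apply: pow2_sqrt; lra.
have Hrho1 : 1 < rho by rewrite -sqrt_1; apply: sqrt_lt_1_alt; lra.
set th := 1 - / rho.
have Hth : 0 < th by have := Rinv_lt_contravar 1 rho ltac:(lra) Hrho1; rewrite Rinv_1 /th; lra.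
have Hm : 0 < mu * th ^ 2 by apply: Rmult_lt_0_compat => //; apply: pow_lt.
exists (4 / (mu * th ^ 2) ^ 2 + 2 / (mu * th ^ 2 * tau)); split.
  by apply: Rplus_lt_0_compat; apply: Rdiv_lt_0_compat; try apply: pow_lt; nra.
move=> c beta a b e Ha Hb He Hq; set K := root_coef mu c (beta + tau).
have HK : 0 <= K := root_coef_ge0 Hmu _ _.
have HC : 0 <= (4 / (mu * th ^ 2) ^ 2 + 2 / (mu * th ^ 2 * tau)) * e ^ 2.
  apply: Rmult_le_pos; last exact: pow2_ge_0.
  by apply: Rplus_le_le_0_compat; apply: Rle_mult_inv_pos; try apply: pow2_ge_0; nra.
case: (Rle_lt_dec a (rho * (K * b))) => Hab.
  have : a ^ 2 <= (rho * (K * b)) ^ 2 by apply: pow_incr.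
  by rewrite Rpow_mult_distr Hrho2; nra.
have Hinv : 0 < / rho < 1.
  by split; [apply: Rinv_0_lt_compat | rewrite -Rinv_1; apply: Rinv_lt_contravar]; lra.
have HKb : K * b <= / rho * a.
  have -> : K * b = / rho * (rho * (K * b)) by field; lra.
  by apply: Rmult_le_compat_l; lra.
have Hgap : th * a <= a - K * b by rewrite /th; lra.
have HKa : K * b <= a by nra.
have Hroot := quad_above_root Hmu Ha Hb HKa; rewrite -/K in Hroot.
have Hyoung : 2 * e * b <= tau * b ^ 2 + e ^ 2 / tau.
  have : 0 <= (e - tau * b) ^ 2 / tau by apply: Rle_mult_inv_pos; [apply: pow2_ge_0 | lra].
  have -> : (e - tau * b) ^ 2 / tau = e ^ 2 / tau - 2 * e * b + tau * b ^ 2 by field; lra.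
  lra.
have : mu * th ^ 2 * a ^ 2 <= 2 * e * a + e ^ 2 / tau.
  have : (th * a) ^ 2 <= (a - K * b) ^ 2 by apply: pow_incr; nra.
  move/(Rmult_le_compat_l _ _ _ (Rlt_le _ _ Hmu)); rewrite Rpow_mult_distr; lra.
move/(absorb_cross_term Hm Htau); nra.
Qed.

Lemma B1coefE L muf mur lm lM tau : 0 < mubar muf mur ->
  B1coef L muf mur lm lM tau
  = (1 + tau) * root_coef (mubar muf mur) (lM + mur) (b1 L mur lm + tau) ^ 2.
Proof.
move=> Hmu; rewrite /B1coef /root_coef /b2.
have -> : b1 L mur lm + tau + (lM + mur) ^ 2 / mubar muf mur
        = b1 L mur lm + (lM + mur) ^ 2 / mubar muf mur + tau by ring.
rewrite /Rdiv Rpow_mult_distr pow_inv pow2_sqrt; last lra.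
field; lra.
Qed.

Theorem lemma3p3 (L muf mur lm lM : R)
  (HL : 0 < L) (Hmur : 0 <= mur) (Hmubar : 0 < mubar muf mur)
  (Hlm : 0 < lm) :
  (forall tau : R, 0 < tau ->
     exists B2 : R, 0 < B2 /\
       forall (n : nat) (f : vec n -> R) (gradf : vec n -> vec n)
              (r : vec n -> ereal) (Lam Laminv : mat n) (xstar : vec n),
         setting L muf mur lm lM f gradf r Lam Laminv xstar ->
         forall (Sample : Type) (G : Sample -> vec n -> vec n)
                (x : vec n) (s : Sample) (p : vec n),
           is_prox_grad_point Lam Laminv r (G s x) x p ->
           norm2 (vsub x xstar)
             <= B1coef L muf mur lm lM tau * norm2 (vsub x p)
                + B2 * norm2 (vsub (gradf x) (G s x)))
  /\
  (forall (n : nat) (f : vec n -> R) (gradf : vec n -> vec n)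
          (r : vec n -> ereal) (Lam Laminv : mat n) (xstar : vec n),
     setting L muf mur lm lM f gradf r Lam Laminv xstar ->
     forall (x p : vec n),
       is_prox_grad_point Lam Laminv r (gradf x) x p ->
       norm2 (vsub x xstar) <= B1coef L muf mur lm lM 0 * norm2 (vsub x p)).
Proof.
split.
- move=> tau Htau; have [C [HC Hbound]] := perturbed_root_bound Hmubar Htau.
  exists C; split=> // n f gradf r Lam Laminv xstar Hset Sample G x s p Hprox.
  rewrite !norm2E B1coefE //.
  apply: Hbound; try exact: norm_ge0.
  exact: (prox_grad_norm_ineq Hset Hprox Hlm Hmur).
- move=> n f gradf r Lam Laminv xstar Hset x p Hprox.
  have := prox_grad_norm_ineq Hset Hprox Hlm Hmur.
  rewrite norm_vsubvv !norm2E B1coefE // !Rplus_0_r => Hq.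
  have Hd := norm_ge0 (vsub x xstar); have Hp := norm_ge0 (vsub x p).
  have := le_root_coef Hmubar Hd Hp (c := lM + mur) (beta := b1 L mur lm) ltac:(lra).
  by move=> Hle; rewrite Rmult_1_l -Rpow_mult_distr; apply: pow_incr.
Qed.
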